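(* Let $n\ge 25$ and let $S_n$ be the star graph with vertices $a_1,\dots,a_n$ and center $a_1$. Then $$\lim_{p\to\infty}\|M_{S_n}\|_p^p=\frac{1+\sqrt{n}}{2}.$$
   Context: For a finite connected graph $G=(V,E)$ with graph distance $d_G$ and $f:V\to\mathbb{R}$, $M_Gf(v)=\sup_{r\geq 0}\frac{1}{|B(v,r)|}\sum_{u\in B(v,r)}|f(u)|$, where $B(v,r)=\{u\in V: d_G(u,v)\le r\}$. For $g:V\to\mathbb{R}$, $\|g\|_p=(\sum_{v\in V}|g(v)|^p)^{1/p}$ and $\|M_G\|_p=\sup_{f\neq 0}\|M_Gf\|_p/\|f\|_p$. The star graph $S_n$ has vertices $a_1,\dots,a_n$ and edges exactly between $a_1$ and each $a_i$, $i\ge 2$. *)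

From HB Require Import structures.
From mathcomp Require Import all_boot all_order all_algebra.
From mathcomp Require Import all_classical all_reals all_analysis.
Set Implicit Arguments. Unset Strict Implicit. Unset Printing Implicit Defensive.
Import Order.TTheory GRing.Theory Num.Theory.
Import numFieldNormedType.Exports.
Local Open Scope classical_set_scope.
Local Open Scope ring_scope.

(* [walkball e v k] = vertices reachable from v by a walk of length <= k,
   i.e. the vertices u with graph distance d(u,v) <= k. *)
Fixpoint walkball (T : finType) (e : rel T) (v : T) (k : nat) : {set T} :=
  match k with
  | 0 => [set v]
  | k'.+1 => walkball e v k' :|: [set u | [exists w in walkball e v k', e w u]]
  end.

Definition gball (T : finType) (e : rel T) (v : T) {R : realType} (r : R) : set T :=
  [set u | exists k : nat, (k%:R <= r) /\ u \in walkball e v k].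

Definition ball_avg (T : finType) (e : rel T) {R : realType}
  (f : T -> R) (v : T) (r : R) : R :=
  (#|[set u | `[< gball e v r u >]]|%:R)^-1 *
  \sum_(u in [set u | `[< gball e v r u >]]) `|f u|.

Definition maxfun (T : finType) (e : rel T) {R : realType}
  (f : T -> R) (v : T) : R :=
  sup [set ball_avg e f v r | r in [set r : R | 0 <= r]].

Definition lpnorm (T : finType) {R : realType} (p : R) (g : T -> R) : R :=
  (\sum_(v : T) `|g v| `^ p) `^ (p^-1).

Definition maxop_norm (T : finType) (e : rel T) {R : realType} (p : R) : R :=
  sup [set lpnorm p (maxfun e f) / lpnorm p f
      | f in [set f : T -> R | exists v, f v != 0]].

(* Star graph S_n on vertices 'I_n (a_{i+1} <-> i), center a_1 <-> 0. *)
Definition star_adj (n : nat) : rel 'I_n :=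
  fun i j => (i != j) && ((val i == 0%N) || (val j == 0%N)).

(* Every ball of radius 2 in S_n is the whole graph, so M f is |f a_1| or the mean of
   |f| at the centre, and at a leaf v also (|f v| + |f a_1|) / 2.  For large p,
   ((1 + z) / 2)^p <= (1 + o(1)) z^(p/2) + o(1) on [0, 1], so by AM-GM a leaf with
   value x contributes at most about a^p / (4 K) + K x^p for any weight K >= 1, where
   a = |f a_1|; leaves dominated by the mean contribute its p-th power, which Jensen
   bounds by ||f||_p^p / n.
   Balancing the two kinds of leaves gives ||M f||_p^p <= ((1 + sqrt n) / 2 + eps) ||f||_p^p
   when n >= 25, and the function 1 at the centre and (1 + sqrt n)^(-2/p) on the leaves
   attains (1 + sqrt n) / 2 exactly. *)

From HB Require Import structures.
From mathcomp Require Import all_boot all_order all_algebra.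
From mathcomp Require Import all_classical all_reals all_analysis.
From mathcomp Require Import ring lra.
Import Order.TTheory GRing.Theory Num.Theory.
Import numFieldNormedType.Exports.
Local Open Scope ring_scope.
Set Implicit Arguments. Unset Strict Implicit. Unset Printing Implicit Defensive.

Section walk_balls.
Variables (R : realType) (T : finType) (e : rel T).
Implicit Types (f : T -> R) (v : T).

Definition walk_avg f v (k : nat) : R :=
  (#|walkball e v k|%:R)^-1 * \sum_(u in walkball e v k) `|f u|.

Lemma walkball_mono v : {homo walkball e v : k k' / (k <= k')%N >-> k \subset k'}.
Proof.
move=> k k'; elim: k' => [|k' IH]; first by rewrite leqn0 => /eqP ->.
rewrite leq_eqVlt => /predU1P [-> //| /IH le_kk'].
exact: fintype.subset_trans le_kk' (finset.subsetUl _ _).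
Qed.

Lemma gball_walkball v {r : R} : 0 <= r ->
  [set u | `[< gball e v r u >]]%classic =i walkball e v (Num.truncn r).
Proof.
move=> r0 u; have /andP [_ r_lt] := truncn_itv r0.
apply/idP/idP => [/set_mem /asboolP [k [kr uk]]|ur]; last first.
  by apply: mem_set; apply/asboolP; exists (Num.truncn r); rewrite truncn_le.
have : k%:R < (Num.truncn r).+1%:R :> R by apply: le_lt_trans r_lt.
by rewrite ltr_nat ltnS => /(walkball_mono v) /fintype.subsetP; apply.
Qed.

Lemma ball_avg_walk_avg f v (r : R) : 0 <= r ->
  ball_avg e f v r = walk_avg f v (Num.truncn r).
Proof.
move=> r0; rewrite /ball_avg /walk_avg (eq_card (gball_walkball v r0)).
by rewrite (eq_bigl _ _ (gball_walkball v r0)).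
Qed.

Lemma maxfun_walk_avg f v : maxfun e f v = sup (range (walk_avg f v)).
Proof.
rewrite /maxfun; congr sup; apply/seteqP; split => x /=.
  by move=> [r r0 <-]; exists (Num.truncn r) => //; rewrite ball_avg_walk_avg.
move=> [k _ <-]; exists k%:R; first by rewrite /= ler0n.
by rewrite ball_avg_walk_avg ?ler0n // natrK.
Qed.

Lemma walk_avg0 f v : walk_avg f v 0 = `|f v|.
Proof. by rewrite /walk_avg /= cards1 big_set1 invr1 mul1r. Qed.

Lemma walk_avg_full f v k : walkball e v k = [set: T] ->
  walk_avg f v k = (#|T|%:R)^-1 * \sum_u `|f u|.
Proof.
by move=> full; rewrite /walk_avg full cardsT; congr (_ * _); apply: eq_bigl => u; rewrite inE.
Qed.

Lemma maxfun_radius2 f v : walkball e v 2 = [set: T] ->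
  maxfun e f v = Num.max (walk_avg f v 0) (Num.max (walk_avg f v 1) (walk_avg f v 2)).
Proof.
move=> full2; rewrite maxfun_walk_avg.
set M := Num.max _ _.
have full k : (2 <= k)%N -> walk_avg f v k = walk_avg f v 2.
  move=> k2; rewrite !walk_avg_full //; apply/eqP.
  by rewrite finset.eqEsubset finset.subsetT -full2 walkball_mono.
have ub : ubound (range (walk_avg f v)) M.
  move=> _ [[|[|k]] _ <-]; rewrite /M !le_max ?lexx ?orbT //.
  by rewrite full ?lexx ?orbT.
have ne : (range (walk_avg f v) !=set0)%classic by exists (walk_avg f v 0), 0%N.
have le_sup k : walk_avg f v k <= sup (range (walk_avg f v)).
  by apply: sup_upper_bound; [split; last exists M | exists k].
by apply/eqP; rewrite eq_le ge_sup // /M !ge_max !le_sup.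
Qed.

End walk_balls.

Section star.
Variables (R : realType) (n : nat).
Local Notation star := (@star_adj n.+1).
Implicit Types (f : 'I_n.+1 -> R) (v : 'I_n.+1).

Definition mean_abs f : R := (n.+1%:R)^-1 * \sum_u `|f u|.

Lemma walkball_star_center1 : walkball star ord0 1 = [set: 'I_n.+1].
Proof.
apply/setP => u; rewrite /= !inE; have [//|u0] := eqVneq u ord0.
by apply/existsP; exists ord0; rewrite !inE eqxx /star_adj eq_sym u0.
Qed.

Lemma walkball_star_leaf1 v : v != ord0 -> walkball star v 1 = [set v; ord0].
Proof.
move=> v0; apply/setP => u; rewrite /= !inE; have [//|uv] := eqVneq u v.
apply/existsP/eqP => [[w]|->]; last by exists v; rewrite !inE eqxx /star_adj v0 orbT.
rewrite !inE => /andP [/eqP -> /andP [_]].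
by move: v0; rewrite -val_eqE /= => /negbTE -> /eqP u0; apply: val_inj.
Qed.

Lemma walkball_star2 v : walkball star v 2 = [set: 'I_n.+1].
Proof.
have center1 : ord0 \in walkball star v 1.
  have [->|v0] := eqVneq v ord0; first by rewrite walkball_star_center1 inE.
  by rewrite walkball_star_leaf1 // !inE eqxx orbT.
have -> : walkball star v 2 =
  walkball star v 1 :|: [set u | [exists w in walkball star v 1, star w u]] by [].
apply/setP => u; rewrite finset.in_setU finset.in_setT; have [->|u0] := eqVneq u ord0.
  by rewrite center1.
by rewrite inE; apply/orP; right; apply/existsP; exists ord0; rewrite center1 /star_adj eq_sym u0.
Qed.

Lemma maxfun_star_center f : maxfun star f ord0 = Num.max `|f ord0| (mean_abs f).
Proof.
rewrite maxfun_radius2 ?walkball_star2 // walk_avg0.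
by rewrite !walk_avg_full ?walkball_star2 ?walkball_star_center1 // card_ord maxxx.
Qed.

Lemma maxfun_star_leaf f v : v != ord0 ->
  maxfun star f v = Num.max `|f v| (Num.max ((`|f v| + `|f ord0|) / 2) (mean_abs f)).
Proof.
move=> v0; rewrite maxfun_radius2 ?walkball_star2 // walk_avg0.
rewrite [walk_avg _ _ _ 2]walk_avg_full ?walkball_star2 // card_ord.
rewrite /walk_avg walkball_star_leaf1 // cards2 v0 big_setU1 ?inE // big_set1.
by rewrite mulrC.
Qed.

End star.

Section powR_facts.
Variable R : realType.
Implicit Types (p t x y : R).

Lemma powRVK (p x : R) : 0 < p -> 0 <= x -> (x `^ p^-1) `^ p = x.
Proof. by move=> p0 x0; rewrite -powRrM mulVf ?gt_eqF // powRr1. Qed.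

Lemma sum_powR_gt0 (T : finType) (f : T -> R) (p : R) : (exists v, f v != 0) ->
  0 < \sum_v `|f v| `^ p.
Proof.
by move=> [v fv0]; rewrite (bigD1 v) //= ltr_pwDl ?powR_gt0 ?normr_gt0 ?sumr_ge0.
Qed.

Lemma powR_convex_comb p t x y : 1 <= p -> 0 <= t -> t <= 1 -> 0 <= x -> 0 <= y ->
  (t * x + (1 - t) * y) `^ p <= t * x `^ p + (1 - t) * y `^ p.
Proof.
move=> p1 t0 t1 x0 y0; have := @convex_powR R p p1 (Itv01 t0 t1) x y.
by rewrite !inE /= !in_itv /= !andbT; apply.
Qed.

Lemma powR_max p x y : 0 <= p -> 0 <= x -> 0 <= y ->
  (Num.max x y) `^ p = Num.max (x `^ p) (y `^ p).
Proof.
move=> p0 x0 y0; have [xy | /ltW yx] := leP x y.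
  by rewrite !max_r // ge0_ler_powR.
by rewrite !max_l // ge0_ler_powR.
Qed.

Lemma powR_mean_seq_le (I : Type) (s : seq I) (y : I -> R) p : 1 <= p ->
  (forall i, 0 <= y i) -> (0 < size s)%N ->
  ((\sum_(i <- s) y i) / (size s)%:R) `^ p <= (\sum_(i <- s) y i `^ p) / (size s)%:R.
Proof.
move=> p1 y0; elim: s => [//|i s IH] _; rewrite !big_cons.
have [/size0nil -> | s0] := posnP (size s); first by rewrite !big_nil !addr0 !divr1.
have {}IH := IH s0; have k0 : 0 < (size s)%:R :> R by rewrite ltr0n.
set k := (size s)%:R : R in k0 IH *.
have -> : (size (i :: s))%:R = k + 1 by rewrite /= -addn1 natrD.
set S := \sum_(j <- s) y j in IH *; set P := \sum_(j <- s) y j `^ p in IH *.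
have S0 : 0 <= S by rewrite sumr_ge0.
have t0 : 0 <= (k + 1)^-1 by rewrite invr_ge0; lra.
have t1 : (k + 1)^-1 <= 1 by rewrite invf_le1; lra.
have -> : (y i + S) / (k + 1) = (k + 1)^-1 * y i + (1 - (k + 1)^-1) * (S / k).
  by field; lra.
apply: (le_trans (powR_convex_comb p1 t0 t1 (y0 i) _)); first by rewrite divr_ge0 //; lra.
have -> : (y i `^ p + P) / (k + 1) = (k + 1)^-1 * y i `^ p + (1 - (k + 1)^-1) * (P / k).
  by field; lra.
by rewrite lerD2l ler_wpM2l // subr_ge0.
Qed.

Lemma powR_mean_le (T : finType) (y : T -> R) p : 1 <= p -> (forall i, 0 <= y i) ->
  (0 < #|T|)%N -> ((\sum_i y i) / #|T|%:R) `^ p <= (\sum_i y i `^ p) / #|T|%:R.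
Proof.
move=> p1 y0; have sizeT : #|T| = size (index_enum T) by rewrite cardT enumT [index_enum T]unlock.
by rewrite sizeT; apply: powR_mean_seq_le; rewrite -?sizeT.
Qed.

End powR_facts.

Section midpoint.
Variable R : realType.
Implicit Types (eta p z L : R).

(* ((1 + z) / 2)^2 = z (1 + u) <= z exp u with u = (1 - z)^2 / (4 z), and
   z^p >= exp (- L) forces p (1 - z) <= L, which makes exp (u p / 2) <= 1 + eta. *)
Lemma midpoint_powR_le_sqrt eta p z L : 0 < eta -> 0 < L -> 2 * L <= p ->
  L ^+ 2 <= 4 * p * ln (1 + eta) -> 0 < z -> z <= 1 -> expR (- L) <= z `^ p ->
  ((1 + z) / 2) `^ p <= (1 + eta) * Num.sqrt (z `^ p).
Proof.
move=> eta0 L0 pL Lp z0 z1 zpL; have p0 : 0 < p by lra.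
have pzL : p * (1 - z) <= L.
  have lnz : ln z <= z - 1 by have := @le_ln1Dx _ (z - 1); rewrite subrKC; apply; lra.
  have : - L <= p * ln z.
    by rewrite -ln_powR -(expRK (- L)) ler_ln ?posrE ?expR_gt0 ?powR_gt0.
  nra.
have z_half : 1 / 2 <= z by nra.
set u := (1 - z) ^+ 2 / (4 * z).
have up : u * p / 2 <= ln (1 + eta).
  have pz0 : 0 <= p * (1 - z) by nra.
  have pzL2 : (p * (1 - z)) ^+ 2 <= L ^+ 2 by rewrite !expr2; nra.
  have pln0 : 0 <= p * ln (1 + eta) by rewrite mulr_ge0 ?ln_ge0 //; lra.
  rewrite (_ : u * p / 2 = (p * (1 - z)) ^+ 2 / (8 * z * p)); last by rewrite /u; field; lra.
  rewrite ler_pdivrMr; nra.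
have sq : ((1 + z) / 2) ^+ 2 <= z * expR u.
  have -> : ((1 + z) / 2) ^+ 2 = z * (1 + u) by rewrite /u; field; lra.
  by rewrite ler_pM2l // expR_ge1Dx.
have -> : ((1 + z) / 2) `^ p = (((1 + z) / 2) ^+ 2) `^ (p / 2).
  by rewrite -powR_mulrn -?powRrM; [congr (_ `^ _); field | lra].
rewrite -powR12_sqrt ?powR_ge0 // -powRrM.
apply: (le_trans (ge0_ler_powR _ _ _ sq)); rewrite ?nnegrE ?sqr_ge0 ?mulr_ge0 ?expR_ge0 //; try lra.
rewrite powRM ?expR_ge0 //; try lra.
rewrite mulrC ler_wpM2r ?powR_ge0 // -expRM -(@lnK _ (1 + eta)) ?posrE; last lra.
by rewrite ler_expR mulrA.
Qed.

(* Below z^p = (eta / 2)^2 compare with the point z1 where equality holds: there the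
   left-hand side is at most (1 + eta) * eta / 2 <= eta. *)
Lemma midpoint_powR_le_sqrt_eventually eta : 0 < eta -> eta <= 1 ->
  \forall p \near +oo, forall z, 0 <= z -> z <= 1 ->
    ((1 + z) / 2) `^ p <= (1 + eta) * Num.sqrt (z `^ p) + eta.
Proof.
move=> eta0 eta1; set t0 := (eta / 2) ^+ 2.
have t0_gt0 : 0 < t0 by rewrite exprn_gt0 //; lra.
have t0_lt1 : t0 < 1 by rewrite /t0 expr2; nra.
set L := - ln t0; have L0 : 0 < L by rewrite oppr_gt0 ln_lt0 // t0_gt0 t0_lt1.
have ln_eta : 0 < ln (1 + eta) by rewrite ln_gt0 //; lra.
near=> p.
have pL : 2 * L <= p by near: p; apply: nbhs_pinfty_ge; rewrite num_real.
have Lp : L ^+ 2 <= 4 * p * ln (1 + eta).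
  have : L ^+ 2 / (4 * ln (1 + eta)) <= p by near: p; apply: nbhs_pinfty_ge; rewrite num_real.
  by rewrite ler_pdivrMr; lra.
have p0 : 0 < p by lra.
have main z : 0 < z -> z <= 1 -> t0 <= z `^ p ->
    ((1 + z) / 2) `^ p <= (1 + eta) * Num.sqrt (z `^ p).
  by move=> ? ? ?; apply: (midpoint_powR_le_sqrt _ L0); rewrite // opprK lnK.
move=> z z0 z1; have sqrt0 : 0 <= Num.sqrt (z `^ p) := sqrtr_ge0 _.
have [t0z | zt0] := lerP t0 (z `^ p).
  have : 0 < z.
    by rewrite lt0r z0 andbT; apply: contraTneq t0z => ->; rewrite powR0 ?gt_eqF // -ltNge.
  by move=> /main /(_ z1 t0z); lra.
set z1' := t0 `^ p^-1.
have z1'p : z1' `^ p = t0 by rewrite -powRrM mulVf ?gt_eqF // powRr1 //; lra.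
have z1'0 : 0 < z1' by rewrite powR_gt0.
have z1'1 : z1' <= 1.
  have -> : 1 = (1 : R) `^ p^-1 by rewrite powR1.
  by apply: ge0_ler_powR; rewrite ?nnegrE ?invr_ge0; lra.
have zz1' : z <= z1'.
  rewrite leNgt; apply/negP => /(gt0_ltr_powR p0); rewrite !nnegrE z1'p.
  by move=> /(_ (ltW z1'0) z0); lra.
have at_z1' : ((1 + z1') / 2) `^ p <= (1 + eta) * (eta / 2).
  have := main z1' z1'0 z1'1; rewrite z1'p lexx sqrtr_sqr ger0_norm; last lra.
  by apply.
have mono : ((1 + z) / 2) `^ p <= ((1 + z1') / 2) `^ p.
  by apply: ge0_ler_powR; rewrite ?nnegrE; lra.
have : 0 <= (1 + eta) * Num.sqrt (z `^ p) by rewrite mulr_ge0 //; lra.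
nra.
Unshelve. all: by end_near.
Qed.

End midpoint.

Section star_inequalities.
Variable R : realType.
Implicit Types (eta p K a x N k w eps : R).

Lemma powR_max_midpoint_le eta p K a x : 0 <= eta -> 1 <= K ->
  (forall z, 0 <= z -> z <= 1 ->
    ((1 + z) / 2) `^ p <= (1 + eta) * Num.sqrt (z `^ p) + eta) ->
  0 <= a -> 0 <= x ->
  (Num.max x ((x + a) / 2)) `^ p <= ((1 + eta) ^+ 2 / (4 * K) + eta) * a `^ p + K * x `^ p.
Proof.
move=> eta0 K1 mid a0 x0.
have coef0 : 0 <= (1 + eta) ^+ 2 / (4 * K) + eta.
  by rewrite addr_ge0 ?divr_ge0 ?sqr_ge0 //; lra.
have [ax | xa] := lerP a x.
  rewrite (max_idPl _); last lra.
  by have := powR_ge0 a p; have := powR_ge0 x p; nra.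
rewrite (max_idPr _); last lra.
have a_gt0 : 0 < a by lra.
set z := x / a; have z0 : 0 <= z by rewrite divr_ge0.
have z1 : z <= 1 by rewrite ler_pdivrMr // mul1r; lra.
have -> : (x + a) / 2 = a * ((1 + z) / 2) by rewrite /z; field; lra.
have -> : x `^ p = a `^ p * z `^ p by rewrite -powRM // /z mulrC divfK ?gt_eqF.
rewrite powRM //; last lra.
apply: (le_trans (ler_wpM2l (powR_ge0 a p) (mid z z0 z1))).
set s := Num.sqrt (z `^ p); have -> : z `^ p = s ^+ 2 by rewrite sqr_sqrtr ?powR_ge0.
have amgm : (1 + eta) * s <= (1 + eta) ^+ 2 / (4 * K) + K * s ^+ 2.
  have -> : (1 + eta) ^+ 2 / (4 * K) + K * s ^+ 2 =
            (1 + eta) * s + ((1 + eta) - 2 * K * s) ^+ 2 / (4 * K) by field; lra.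
  by rewrite lerDl divr_ge0 ?sqr_ge0 //; lra.
rewrite (_ : _ + K * _ = a `^ p * ((1 + eta) ^+ 2 / (4 * K) + K * s ^+ 2 + eta)); last by ring.
by rewrite ler_wpM2l ?powR_ge0 // lerD2r.
Qed.

(* Writing c = k / N, the slack of the final inequality is
   c (w^2 - 4 w - 6 eps) + 4 c^2 + eps (3 w - 5/2) + 2 eps^2 >= 0, using w >= 5. *)
Lemma star_budget_le N k w eps : 25 <= N -> 0 <= k -> k <= N - 1 ->
  0 <= w -> w ^+ 2 = N -> 0 < eps -> eps <= 1 / 2 ->
  1 + k / N + (N - 1 - k) * ((1 + eps / (2 * N)) ^+ 2 / (4 * ((1 + w) / 2 + eps - k / N))
    + eps / (2 * N)) <= (1 + w) / 2 + eps.
Proof.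
move=> N25 k0 kN w0 wN eps0 eps1; have w5 : 5 <= w by nra.
have N0 : 0 < N by lra.
set c := k / N; set eta := eps / (2 * N); set K := (1 + w) / 2 + eps.
have c0 : 0 <= c by rewrite divr_ge0 //; lra.
have c1 : c <= 1 by rewrite ler_pdivrMr //; lra.
have eta0 : 0 <= eta by rewrite divr_ge0 //; lra.
have eta1 : eta <= 1 by rewrite ler_pdivrMr; lra.
have etaN : eta * N = eps / 2 by rewrite /eta; field; lra.
set j := N - 1 - k; have j0 : 0 <= j by rewrite /j; lra.
have jeta : j * eta <= eps / 2 by rewrite -etaN mulrC ler_wpM2l // /j; lra.
have sq_eta : (1 + eta) ^+ 2 <= 1 + 3 * eta by rewrite expr2; nra.
have Kc : 2 <= K - c by rewrite /K; lra.
have slack : j + 3 * (eps / 2) <= 4 * (K - c) * (K - c - 1 - eps / 2).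
  have jE : j = w ^+ 2 * (1 - c) - 1 by rewrite wN /j /c; field; lra.
  have w_quad : 0 <= w ^+ 2 - 4 * w - 6 * eps.
    have : 0 <= (w - 5) * (w + 1) by apply: mulr_ge0; lra.
    nra.
  have -> : 4 * (K - c) * (K - c - 1 - eps / 2) = j + 3 * (eps / 2) +
      (c * (w ^+ 2 - 4 * w - 6 * eps) + 4 * c ^+ 2 + eps * (3 * w - 5 / 2) + 2 * eps ^+ 2).
    by rewrite jE /K; field.
  by rewrite lerDl !addr_ge0 ?mulr_ge0 ?sqr_ge0 ?invr_ge0 //; lra.
have leaves : j * ((1 + eta) ^+ 2 / (4 * (K - c))) <= K - c - 1 - eps / 2.
  rewrite mulrA ler_pdivrMr; last lra.
  have : j * (1 + eta) ^+ 2 <= j * (1 + 3 * eta) by rewrite ler_wpM2l.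
  nra.
rewrite mulrDr; lra.
Qed.

End star_inequalities.

Section star_upper_bound.
Variables (R : realType) (n : nat) (f : 'I_n.+1 -> R) (p eps : R).
Hypotheses (n25 : (25 <= n.+1)%N) (p1 : 1 <= p) (eps0 : 0 < eps) (eps_half : eps <= 1 / 2).
Hypothesis midpoint : forall z, 0 <= z -> z <= 1 ->
  ((1 + z) / 2) `^ p <= (1 + eps / (2 * n.+1%:R)) * Num.sqrt (z `^ p) + eps / (2 * n.+1%:R).

Local Notation N := (n.+1%:R : R).
Local Notation w := (Num.sqrt N).
Local Notation K := ((1 + w) / 2 + eps).
Local Notation A := (mean_abs f).
Local Notation a := `|f ord0|.
Local Notation x i := `|f (lift ord0 i)|.
Local Notation D := (\sum_u `|f u| `^ p).

Let N25 : 25 <= N. Proof. by rewrite (ler_nat R 25 n.+1). Qed.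
Let wN : w ^+ 2 = N. Proof. by rewrite sqr_sqrtr ?ler0n. Qed.
Let w0 : 0 <= w. Proof. exact: sqrtr_ge0. Qed.
Let K3 : 3 <= K.
Proof. by have := wN; have := N25; have := w0; have := eps0; nra. Qed.
Let p0 : 0 <= p. Proof. exact: le_trans ler01 p1. Qed.
Let A0 : 0 <= A. Proof. by rewrite mulr_ge0 ?invr_ge0 ?sumr_ge0. Qed.
Let D0 : 0 <= D. Proof. by rewrite sumr_ge0 // => u _; rewrite powR_ge0. Qed.
Let D_split : D = a `^ p + \sum_(i < n) x i `^ p. Proof. by rewrite big_ord_recl. Qed.

Lemma mean_powR_le : N * A `^ p <= D.
Proof.
have := @powR_mean_le R _ (fun u => `|f u|) p p1 (fun u => normr_ge0 _).
rewrite card_ord => /(_ isT); rewrite ler_pdivlMr ?ltr0n // mulrC.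
by rewrite [_ / N]mulrC.
Qed.

Lemma star_upper_center_below : a <= A ->
  (Num.max a A) `^ p + \sum_(i < n) (Num.max (x i) (Num.max ((x i + a) / 2) A)) `^ p <= K * D.
Proof.
move=> aA; set P := A `^ p.
have center : (Num.max a A) `^ p <= a `^ p + P.
  by rewrite powR_max // ge_max lerDl lerDr !powR_ge0.
have leaf i : (Num.max (x i) (Num.max ((x i + a) / 2) A)) `^ p <= x i `^ p + P.
  have mid : (x i + a) / 2 <= Num.max (x i) A.
    by rewrite le_max; have [xA | Ax] := leP (x i) A; apply/orP; [right | left]; lra.
  by rewrite maxCA (max_r mid) powR_max // ge_max lerDl lerDr !powR_ge0.
have leaves : \sum_(i < n) (Num.max (x i) (Num.max ((x i + a) / 2) A)) `^ p
    <= \sum_(i < n) x i `^ p + P *+ n.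
  rewrite -[in P *+ n](card_ord n) -sumr_const -big_split /=.
  by apply: ler_sum => i _.
have NP : N * P = P *+ n + P by rewrite mulr_natl mulrSr.
have := mean_powR_le; rewrite -/P; have : 2 * D <= K * D by have := D0; have := K3; nra.
have := D_split; lra.
Qed.

Lemma star_upper_center_above : A <= a ->
  (Num.max a A) `^ p + \sum_(i < n) (Num.max (x i) (Num.max ((x i + a) / 2) A)) `^ p <= K * D.
Proof.
(* Leaves where the mean dominates cost k P <= (k / N) D in total; the other leaves
   are charged to a^p and x_i^p with weight K - k / N. *)
move=> Aa; rewrite (max_l Aa); set P := A `^ p.
set L := fun i => Num.max (x i) ((x i + a) / 2).
have -> : \sum_(i < n) (Num.max (x i) (Num.max ((x i + a) / 2) A)) `^ p =
          \sum_(i < n) Num.max (L i `^ p) P.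
  by apply: eq_bigr => i _; rewrite maxA powR_max // le_max normr_ge0.
pose small i := L i `^ p < P.
set k := \sum_(i < n | small i) (1 : R); set j := \sum_(i < n | ~~ small i) (1 : R).
have kj : k + j = n%:R.
  by rewrite -[n]card_ord -sumr_const (bigID small).
have k0 : 0 <= k by rewrite sumr_ge0.
have j0 : 0 <= j by rewrite sumr_ge0.
rewrite (bigID small) /=.
have -> : \sum_(i < n | small i) Num.max (L i `^ p) P = k * P.
  by rewrite mulr_suml; apply: eq_bigr => i /ltW small_i; rewrite mul1r max_r.
have -> : \sum_(i < n | ~~ small i) Num.max (L i `^ p) P = \sum_(i < n | ~~ small i) L i `^ p.
  by apply: eq_bigr => i; rewrite -leNgt => ?; rewrite max_l.
set c := k / N; set eta := eps / (2 * N).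
set beta := (1 + eta) ^+ 2 / (4 * (K - c)) + eta.
have nN : n%:R = N - 1 by rewrite -natr1 addrK.
have c1 : c <= 1 by rewrite ler_pdivrMr ?ltr0n //; lra.
have big_leaves : \sum_(i < n | ~~ small i) L i `^ p <=
    beta * a `^ p * j + (K - c) * \sum_(i < n | ~~ small i) x i `^ p.
  rewrite [_ * j]mulr_sumr mulr_sumr -big_split /=; apply: ler_sum => i _; rewrite mulr1.
  by apply: powR_max_midpoint_le; rewrite ?divr_ge0 ?mulr_ge0 ?(ltW eps0) //; have := K3; lra.
have budget : 1 + c + j * beta <= K.
  have := star_budget_le N25 k0 (_ : k <= N - 1) w0 wN eps0 eps_half.
  by rewrite (_ : N - 1 - k = j); [apply; lra | lra].
have kP : k * P <= c * D.
  have PD : P <= D / N by rewrite ler_pdivlMr ?ltr0n // mulrC mean_powR_le.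
  by rewrite /c mulrAC -mulrA ler_wpM2l.
rewrite D_split (bigID small) /= in kP *.
have := ler_wpM2l (powR_ge0 a p) budget.
have SB0 : 0 <= \sum_(i < n | small i) x i `^ p by rewrite sumr_ge0 // => i _; rewrite powR_ge0.
have : c * \sum_(i < n | small i) x i `^ p <= K * \sum_(i < n | small i) x i `^ p.
  by rewrite ler_wpM2r //; have := K3; lra.
lra.
Qed.

Lemma sum_maxfun_star_le : \sum_v `|maxfun (@star_adj n.+1) f v| `^ p <= K * D.
Proof.
rewrite big_ord_recl maxfun_star_center ger0_norm ?le_max ?normr_ge0 //.
under eq_bigr => i _ do
  rewrite maxfun_star_leaf 1?eq_sym ?neq_lift // ger0_norm ?le_max ?normr_ge0 //.
by case/orP: (le_total a A) => [/star_upper_center_below | /star_upper_center_above].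
Qed.

End star_upper_bound.

(* Value 1 at the centre and x = s^(2/p) on the leaves, s = 1 / (1 + w), w = sqrt (n + 1):
   each leaf average (1 + x) / 2 is at least sqrt x, and (1 + w) / 2 * (1 + n s^2) = 1 + n s. *)
Lemma star_lower_witness (R : realType) (n : nat) (p : R) : 0 < p ->
  exists2 f : 'I_n.+1 -> R, exists v, f v != 0 &
    (1 + Num.sqrt (n.+1%:R : R)) / 2 * \sum_v `|f v| `^ p <=
    \sum_v `|maxfun (@star_adj n.+1) f v| `^ p.
Proof.
move=> p0; set w := Num.sqrt (n.+1%:R : R).
have w0 : 0 <= w := sqrtr_ge0 _.
have nE : n%:R = w ^+ 2 - 1 by rewrite sqr_sqrtr ?ler0n // -natr1 addrK.
set s := (1 + w)^-1; have s0 : 0 < s by rewrite invr_gt0; lra.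
set x := s `^ (2 / p); have x0 : 0 <= x := powR_ge0 _ _.
have xp : x `^ p = s ^+ 2.
  by rewrite -powRrM -powR_mulrn ?(ltW s0) //; congr (_ `^ _); field; lra.
have sqrt_xp : Num.sqrt x `^ p = s.
  rewrite -powR12_sqrt // -!powRrM (_ : 2 / p * (2^-1 * p) = 1) ?powRr1 //; first lra.
  by field; lra.
pose f (u : 'I_n.+1) : R := if u == ord0 then 1 else x.
have f0 : f ord0 = 1 by rewrite /f /= ?eqxx.
have fl i : f (lift ord0 i) = x by rewrite /f eq_sym (negbTE (neq_lift _ _)).
exists f; first by exists ord0; rewrite f0 oner_neq0.
have -> : \sum_v `|f v| `^ p = 1 + n%:R * s ^+ 2.
  rewrite big_ord_recl f0 normr1 powR1.
  under eq_bigr => i _ do rewrite fl (ger0_norm x0) xp.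
  by rewrite sumr_const card_ord mulr_natl.
have center : 1 <= `|maxfun (@star_adj n.+1) f ord0| `^ p.
  rewrite maxfun_star_center f0 normr1 ger0_norm ?le_max ?ler01 //.
  apply: le_trans (_ : 1 `^ p <= _); first by rewrite powR1.
  by rewrite ge0_ler_powR ?nnegrE ?le_max ?lexx ?ler01 ?(ltW p0).
have leaf i : s <= `|maxfun (@star_adj n.+1) f (lift ord0 i)| `^ p.
  rewrite maxfun_star_leaf 1?eq_sym ?neq_lift // fl f0 normr1 (ger0_norm x0).
  have amgm : Num.sqrt x <= (x + 1) / 2.
    have := sqr_ge0 (Num.sqrt x - 1); rewrite sqrrB1 sqr_sqrtr //; lra.
  have m : Num.sqrt x <= Num.max x (Num.max ((x + 1) / 2) (mean_abs f)).
    by rewrite !le_max amgm orbT.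
  have m0 := le_trans (sqrtr_ge0 x) m.
  rewrite ger0_norm // -sqrt_xp; apply: ge0_ler_powR; rewrite ?nnegrE ?sqrtr_ge0 //; lra.
have leaves : n%:R * s <= \sum_(i < n) `|maxfun (@star_adj n.+1) f (lift ord0 i)| `^ p.
  rewrite (_ : n%:R * s = \sum_(i < n) s); last by rewrite sumr_const card_ord mulr_natl.
  by apply: ler_sum => i _; exact: leaf.
apply: le_trans (_ : 1 + n%:R * s <= _); last by rewrite big_ord_recl lerD.
by rewrite nE /s le_eqVlt; apply/orP; left; apply/eqP; field; lra.
Qed.

Section operator_norm.
Variables (R : realType) (T : finType) (e : rel T).

Lemma maxop_norm_powR_bounds (p K K' : R) : 0 < p -> 0 < K' ->
  (forall f : T -> R, (exists v, f v != 0) ->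
     \sum_v `|maxfun e f v| `^ p <= K * \sum_v `|f v| `^ p) ->
  (exists2 f : T -> R, exists v, f v != 0 &
     K' * \sum_v `|f v| `^ p <= \sum_v `|maxfun e f v| `^ p) ->
  K' <= maxop_norm e p `^ p <= K.
Proof.
move=> p0 K'0 upper [g g0 lower].
have sum_ge0 (h : T -> R) : 0 <= \sum_v `|h v| `^ p by rewrite sumr_ge0 // => v _; rewrite powR_ge0.
have ip0 : 0 <= p^-1 by rewrite invr_ge0 ltW.
have K'K : K' <= K.
  by rewrite -(ler_pM2r (sum_powR_gt0 p g0)); apply: le_trans lower (upper g g0).
have ratio_le f : (exists v, f v != 0) -> lpnorm p (maxfun e f) / lpnorm p f <= K `^ p^-1.
  move=> f0; rewrite /lpnorm ler_pdivrMr ?powR_gt0 ?sum_powR_gt0 // -powRM ?sum_ge0 //; last lra.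
  by apply: ge0_ler_powR; rewrite ?nnegrE ?upper ?sum_ge0 ?mulr_ge0 //; lra.
have ratio_ge : K' `^ p^-1 <= lpnorm p (maxfun e g) / lpnorm p g.
  rewrite /lpnorm ler_pdivlMr ?powR_gt0 ?sum_powR_gt0 // -powRM ?sum_ge0 //; last lra.
  by apply: ge0_ler_powR; rewrite ?nnegrE ?sum_ge0 ?mulr_ge0 //; lra.
set S := [set lpnorm p (maxfun e f) / lpnorm p f | f in [set f | exists v, f v != 0]]%classic.
have hasS : has_sup S.
  split; first by exists (lpnorm p (maxfun e g) / lpnorm p g), g.
  by exists (K `^ p^-1) => x [f f0 <-]; exact: ratio_le.
have norm_le : maxop_norm e p <= K `^ p^-1.
  by apply: ge_sup => [|x [f f0 <-]]; [case: hasS | exact: ratio_le].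
have norm_ge : K' `^ p^-1 <= maxop_norm e p.
  by apply: le_trans ratio_ge (sup_upper_bound hasS _); exists g.
apply/andP; split.
  rewrite -[leLHS](powRVK p0 (ltW K'0)) ge0_ler_powR ?nnegrE ?powR_ge0 ?(ltW p0) //.
  exact: le_trans (powR_ge0 _ _) norm_ge.
rewrite -[leRHS](@powRVK _ p K) //; last lra.
rewrite ge0_ler_powR ?nnegrE ?powR_ge0 ?(ltW p0) //.
exact: le_trans (powR_ge0 _ _) norm_ge.
Qed.

End operator_norm.

Unset Implicit Arguments.
Local Open Scope classical_set_scope.

Theorem theorem3p6 (R : realType) (n : nat) (hn : (25 <= n)%N) :
  (maxop_norm (@star_adj n) (p : R)) `^ p @[p --> +oo]
    --> (1 + Num.sqrt (n%:R : R)) / 2.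
Proof.
case: n hn => [//|n] hn; set K := (1 + Num.sqrt (n.+1%:R : R)) / 2.
have K0 : 0 < K by rewrite divr_gt0 // ltr_pwDl ?sqrtr_ge0.
apply/cvgrPdist_le => eps eps0; set e := Num.min eps (1 / 2).
have e0 : 0 < e by rewrite lt_min eps0 divr_gt0.
have e_half : e <= 1 / 2 by rewrite ge_min lexx orbT.
have e_eps : e <= eps by rewrite ge_min lexx.
have N1 : 1 <= n.+1%:R :> R by rewrite ler1n.
have eta0 : 0 < e / (2 * n.+1%:R) by rewrite divr_gt0 //; lra.
have eta1 : e / (2 * n.+1%:R) <= 1 by rewrite ler_pdivrMr; lra.
have mid := midpoint_powR_le_sqrt_eventually eta0 eta1.
near=> p.
have p1 : 1 <= p by near: p; apply: nbhs_pinfty_ge; rewrite num_real.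
have midp : forall z, 0 <= z -> z <= 1 -> ((1 + z) / 2) `^ p <=
    (1 + e / (2 * n.+1%:R)) * Num.sqrt (z `^ p) + e / (2 * n.+1%:R) by near: p.
have p0 : 0 < p := lt_le_trans ltr01 p1.
have /andP [lower upper] := maxop_norm_powR_bounds p0 K0
  (fun f _ => sum_maxfun_star_le f hn p1 e0 e_half midp) (star_lower_witness n p0).
rewrite -/K in lower upper; rewrite ler_norml; apply/andP; split; lra.
Unshelve. all: by end_near.
Qed.
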